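(* For all $g,g'\in G$: (i) $\langle go,g\omega_-\rangle=H(gr)=-\langle g^{-1}o,\omega_-\rangle$; (ii) $H(g'g)=H(g)+\langle g'o,g'g\omega_+\rangle$; (iii) $H(g'gr)=H(gr)+\langle g'o,g'g\omega_-\rangle$.
   Context: Let $q\ge2$ and $\mathfrak G$ the $(q+1)$-regular tree with vertex set $\mathfrak X$ and graph distance $d$; $\Omega$ is its boundary (infinite non-backtracking edge chains modulo eventual equality up to shift), $[x,\omega)$ the geodesic ray from $x$ to $\omega$. Fix a vertex $o$ and $\omega_-\neq\omega_+\in\Omega$ such that $o$ lies on the geodesic $]\omega_-,\omega_+[$. Horocycle bracket: $\langle x,\omega\rangle=d(o,y)-d(x,y)$ where $[o,\omega)\cap[x,\omega)=[y,\omega)$. $G=\mathrm{Aut}(\mathfrak G)$, $K=\mathrm{Stab}_G(o)$, $B_{\omega_+}=\{g\in G:g\omega_+=\omega_+,\ g\text{ fixes some vertex}\}$, and $\tau\in G$ a fixed automorphism with $\tau\omega_\pm=\omega_\pm$ translating $]\omega_-,\omega_+[$ by one step towards $\omega_+$. Every $g\in G$ can be written $g=kn\tau^j$ with $k\in K$, $n\in B_{\omega_+}$, and $j=:H(g)\in\mathbb Z$ unique. $r\in K$ is a fixed element with $r^2=\mathrm{id}$ and $r\tau^jr^{-1}=\tau^{-j}$ for all $j\in\mathbb Z$. *)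

From Stdlib Require Import ZArith List ClassicalEpsilon.
Set Implicit Arguments.

Section Tree.
Variables (X : Type) (adj : X -> X -> Prop).

Inductive walk : nat -> X -> X -> Prop :=
| walk0 x : walk 0 x x
| walkS n x y z : adj x y -> walk n y z -> walk (S n) x z.

Definition is_dist (x y : X) (n : nat) : Prop :=
  walk n x y /\ forall m, walk m x y -> n <= m.
Definition dist (x y : X) : nat := epsilon (inhabits 0) (is_dist x y).

Definition is_regular_tree (q : nat) : Prop :=
  (forall x y, adj x y -> adj y x) /\
  (forall x, ~ adj x x) /\
  (forall x y, exists n, walk n x y) /\
  (forall (n : nat) (p : nat -> X), 1 <= n ->
     (forall i, i < n -> adj (p i) (p (S i))) ->
     (forall i, S (S i) <= n -> p (S (S i)) <> p i) ->
     p 0 <> p n) /\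
  (forall x, exists l : list X,
     length l = S q /\ NoDup l /\ forall y, adj x y <-> In y l).

(* infinite non-backtracking chains (rays); boundary points are rays
   modulo [ray_equiv] (eventual equality up to shift) *)
Definition is_ray (r : nat -> X) : Prop :=
  forall n, adj (r n) (r (S n)) /\ r (S (S n)) <> r n.
Definition ray_equiv (r s : nat -> X) : Prop :=
  exists k m, forall n, r (n + k) = s (n + m).

Definition geod_ray (x : X) (w r : nat -> X) : Prop :=
  is_ray r /\ r 0 = x /\ ray_equiv r w.

(* horocycle bracket <x, w> with base point o *)
Definition horo (o x : X) (w : nat -> X) : Z :=
  epsilon (inhabits 0%Z) (fun z => exists (y : X) (ro rx ry : nat -> X),
    geod_ray o w ro /\ geod_ray x w rx /\ geod_ray y w ry /\
    (forall v, ((exists i, ro i = v) /\ (exists i, rx i = v)) <->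
               (exists i, ry i = v)) /\
    z = (Z.of_nat (dist o y) - Z.of_nat (dist x y))%Z).

Record Aut := mkAut {
  af : X -> X;
  ainv : X -> X;
  ainvK : forall x, ainv (af x) = x;
  afK : forall x, af (ainv x) = x;
  af_adj : forall x y, adj x y <-> adj (af x) (af y) }.

Definition aut_eq (g h : Aut) : Prop := forall x, af g x = af h x.

Program Definition aut_id : Aut := @mkAut (fun x => x) (fun x => x) _ _ _.
Next Obligation. tauto. Qed.

Program Definition aut_comp (g h : Aut) : Aut :=
  @mkAut (fun x => af g (af h x)) (fun x => ainv h (ainv g x)) _ _ _.
Next Obligation. now rewrite !ainvK. Qed.
Next Obligation. now rewrite !afK. Qed.
Next Obligation. now rewrite (af_adj h), (af_adj g). Qed.

Program Definition aut_inv (g : Aut) : Aut := @mkAut (ainv g) (af g) _ _ _.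
Next Obligation. now rewrite afK. Qed.
Next Obligation. now rewrite ainvK. Qed.
Next Obligation. rewrite (af_adj g (ainv g x) (ainv g y)), !afK; tauto. Qed.

Fixpoint aut_npow (g : Aut) (n : nat) : Aut :=
  match n with O => aut_id | S n => aut_comp g (aut_npow g n) end.

Definition aut_zpow (g : Aut) (j : Z) : Aut :=
  match j with
  | Z0 => aut_id
  | Zpos p => aut_npow g (Pos.to_nat p)
  | Zneg p => aut_npow (aut_inv g) (Pos.to_nat p)
  end.

Definition act_ray (g : Aut) (w : nat -> X) : nat -> X := fun n => af g (w n).

Definition inK (o : X) (k : Aut) : Prop := af k o = o.
Definition inB (wp : nat -> X) (n : Aut) : Prop :=
  ray_equiv (act_ray n wp) wp /\ exists x, af n x = x.

(* H(g) = the j with g = k n tau^j, k in K, n in B_{w+} *)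
Definition Hiw (o : X) (wp : nat -> X) (tau : Aut) (g : Aut) : Z :=
  epsilon (inhabits 0%Z) (fun j => exists k n, inK o k /\ inB wp n /\
    aut_eq g (aut_comp k (aut_comp n (aut_zpow tau j)))).

End Tree.

(* In a tree non-backtracking walks are the unique geodesics, so the horocycle bracket
   <x, w> equals d(o, w_t) - d(x, w_t) for all large t along a ray w_t towards w.  Hence
   it is a cocycle: <h x, h w> = <x, w> - <h^-1 o, w> for every automorphism h.  In
   g = k n tau^j the factor k fixes o, n fixes w+ and a vertex (so it does not shift
   <., w+>) and tau^j shifts <., w+> by j; therefore H(g) = - <g^-1 o, w+>.  Such a
   decomposition exists because the stabiliser of o acts transitively on the ends of a
   regular tree: an automorphism fixing o is built level by level from bijections between
   sets of children.  Since r fixes o and maps w- to w+, H(g r) = - <g^-1 o, w->, and the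
   three identities become instances of the cocycle relation. *)

From Stdlib Require Import ZArith Lia List Classical ClassicalEpsilon Wf_nat.

Lemma nat_least (P : nat -> Prop) :
  (exists n, P n) -> exists n, P n /\ forall m, P m -> n <= m.
Proof.
  intros HP.
  destruct (dec_inh_nat_subset_has_unique_least_element P (fun n => classic (P n)) HP)
    as (n & Hn & _).
  exists n; exact Hn.
Qed.

Section Tree.
Variables (X : Type) (adj : X -> X -> Prop).

(** * Ends and automorphisms *)

Lemma ray_equiv_refl (r : nat -> X) : ray_equiv r r.
Proof. exists 0, 0; auto. Qed.

Lemma ray_equiv_sym (r s : nat -> X) : ray_equiv r s -> ray_equiv s r.
Proof. intros (k & m & H); exists m, k; auto. Qed.

Lemma ray_equiv_trans (r s t : nat -> X) : ray_equiv r s -> ray_equiv s t -> ray_equiv r t.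
Proof.
  intros (k & m & H1) (k' & m' & H2). exists (k' + k), (m + m'). intro n.
  replace (n + (k' + k)) with (n + k' + k) by lia. rewrite H1.
  replace (n + k' + m) with (n + m + k') by lia. rewrite H2. f_equal; lia.
Qed.

Lemma ray_equiv_tail (r : nat -> X) a : ray_equiv r (fun n => r (n + a)).
Proof. exists a, 0. intro n. rewrite Nat.add_0_r. reflexivity. Qed.

Lemma ray_equiv_ext (r s : nat -> X) : (forall n, r n = s n) -> ray_equiv r s.
Proof. intros H. exists 0, 0. auto. Qed.

Lemma ray_equiv_act (h : Aut adj) (r s : nat -> X) :
  ray_equiv r s -> ray_equiv (act_ray h r) (act_ray h s).
Proof. intros (k & m & H). exists k, m. intro n. unfold act_ray. rewrite H. reflexivity. Qed.

Lemma ainv_fixed (h : Aut adj) x : af h x = x -> ainv h x = x.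
Proof. intros H. rewrite <- H at 1. apply ainvK. Qed.

Lemma npow_S_r (g : Aut adj) m x : af (aut_npow g (S m)) x = af (aut_npow g m) (af g x).
Proof. induction m as [|m IH]; cbn in *; auto. rewrite <- IH. reflexivity. Qed.

Lemma npow_cancel (g h : Aut adj) : (forall y, af h (af g y) = y) ->
  forall m x, af (aut_npow h m) (af (aut_npow g m) x) = x.
Proof.
  intros Hgh m; induction m as [|m IH]; intro x; auto.
  rewrite npow_S_r. cbn [aut_npow af aut_comp]. rewrite Hgh. apply IH.
Qed.

Lemma zpow_opp_cancel (g : Aut adj) j x : af (aut_zpow g (- j)) (af (aut_zpow g j) x) = x.
Proof.
  destruct j as [|p|p]; cbn [aut_zpow Z.opp].
  - reflexivity.
  - apply npow_cancel. intro y. apply ainvK.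
  - apply npow_cancel. intro y. apply afK.
Qed.

Lemma ray_equiv_act_inv (g : Aut adj) w :
  ray_equiv (act_ray g w) w -> ray_equiv (act_ray (aut_inv g) w) w.
Proof.
  intros Hg. apply ray_equiv_trans with (act_ray (aut_inv g) (act_ray g w)).
  - apply ray_equiv_act, ray_equiv_sym, Hg.
  - apply ray_equiv_ext. intro n. apply ainvK.
Qed.

Lemma ray_equiv_act_npow (g : Aut adj) w m :
  ray_equiv (act_ray g w) w -> ray_equiv (act_ray (aut_npow g m) w) w.
Proof.
  intros Hg. induction m as [|m IH]; [apply ray_equiv_refl|].
  change (act_ray (aut_npow g (S m)) w) with (act_ray g (act_ray (aut_npow g m) w)).
  apply ray_equiv_trans with (act_ray g w); [apply ray_equiv_act|]; assumption.
Qed.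

Lemma ray_equiv_act_zpow (g : Aut adj) w j :
  ray_equiv (act_ray g w) w -> ray_equiv (act_ray (aut_zpow g j) w) w.
Proof.
  intros Hg. destruct j as [|p|p]; cbn [aut_zpow].
  - apply ray_equiv_refl.
  - apply ray_equiv_act_npow, Hg.
  - apply ray_equiv_act_npow, ray_equiv_act_inv, Hg.
Qed.

Section Translation.
Variables (L : Z -> X).

Lemma npow_translate (h : Aut adj) c : (forall n, af h (L n) = L (n + c)%Z) ->
  forall m z, af (aut_npow h m) (L z) = L (z + Z.of_nat m * c)%Z.
Proof.
  intros Hh m z. induction m as [|m IH]; cbn [aut_npow af aut_comp aut_id].
  - f_equal; lia.
  - rewrite IH, Hh. f_equal; lia.
Qed.

Lemma inv_translate (h : Aut adj) c : (forall n, af h (L n) = L (n + c)%Z) ->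
  forall n, af (aut_inv h) (L n) = L (n - c)%Z.
Proof.
  intros Hh n. cbn [af aut_inv].
  rewrite <- (ainvK h (L (n - c)%Z)), Hh. do 2 f_equal. lia.
Qed.

Lemma zpow_translate (g : Aut adj) : (forall n, af g (L n) = L (n + 1)%Z) ->
  forall j z, af (aut_zpow g j) (L z) = L (z + j)%Z.
Proof.
  intros Hg [|p|p] z; cbn [aut_zpow].
  - cbn. f_equal; lia.
  - rewrite (npow_translate g 1 Hg). f_equal; lia.
  - rewrite (npow_translate (aut_inv g) (-1)).
    + f_equal; lia.
    + intro n. rewrite (inv_translate g 1 Hg). f_equal; lia.
Qed.

End Translation.

(** * Non-backtracking walks are geodesics *)

Hypothesis adj_sym : forall x y, adj x y -> adj y x.
Hypothesis no_cycle : forall (n : nat) (p : nat -> X), 1 <= n ->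
  (forall i, i < n -> adj (p i) (p (S i))) ->
  (forall i, S (S i) <= n -> p (S (S i)) <> p i) ->
  p 0 <> p n.
Hypothesis connected : forall x y, exists n, walk adj n x y.

Definition nonbacktracking (p : nat -> X) (n : nat) : Prop :=
  (forall i, i < n -> adj (p i) (p (S i))) /\
  (forall i, S (S i) <= n -> p (S (S i)) <> p i).

Lemma nonbacktracking_le p n m : nonbacktracking p n -> m <= n -> nonbacktracking p m.
Proof. intros [H1 H2] Hm; split; intros; [apply H1 | apply H2]; lia. Qed.

Lemma nonbacktracking_tail p n : nonbacktracking p (S n) -> nonbacktracking (fun i => p (S i)) n.
Proof. intros [H1 H2]; split; intros; [apply H1 | apply H2]; lia. Qed.

Lemma nonbacktracking_rev p n : nonbacktracking p n -> nonbacktracking (fun i => p (n - i)) n.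
Proof.
  intros [H1 H2]; split; intros i Hi.
  - replace (n - i) with (S (n - S i)) by lia. apply adj_sym, H1. lia.
  - replace (n - i) with (S (S (n - S (S i)))) by lia.
    intro E. apply (H2 (n - S (S i))); [lia | auto].
Qed.

Lemma nonbacktracking_aut (h : Aut adj) p n :
  nonbacktracking p n -> nonbacktracking (fun i => af h (p i)) n.
Proof.
  intros [H1 H2]; split; intros i Hi.
  - apply af_adj, H1, Hi.
  - intro E. apply (f_equal (ainv h)) in E. rewrite !ainvK in E. revert E. apply H2, Hi.
Qed.

Lemma nonbacktracking_closed p n : nonbacktracking p n -> p 0 = p n -> n = 0.
Proof.
  intros [H1 H2] E. destruct n as [|n]; [reflexivity|].
  exfalso. exact (no_cycle (S n) p ltac:(lia) H1 H2 E).
Qed.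

Definition glue (p : nat -> X) (n : nat) (s : nat -> X) (i : nat) : X :=
  if i <=? n then p i else s (i - n).

Lemma glue_left p n s i : i <= n -> glue p n s i = p i.
Proof. intros Hi. unfold glue. destruct (Nat.leb_spec i n); [reflexivity | lia]. Qed.

Lemma glue_right p n s i : p n = s 0 -> n <= i -> glue p n s i = s (i - n).
Proof.
  intros Hj Hi. unfold glue. destruct (Nat.leb_spec i n); [|reflexivity].
  replace i with n by lia. rewrite Nat.sub_diag. exact Hj.
Qed.

Definition edge (x y : X) (i : nat) : X := match i with 0 => x | _ => y end.

Lemma nonbacktracking_edge x y : adj x y -> nonbacktracking (edge x y) 1.
Proof. intros Hxy. split; intros i Hi; [replace i with 0 by lia; exact Hxy | lia]. Qed.

Lemma nonbacktracking_glue p n s m :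
  nonbacktracking p n -> nonbacktracking s m -> p n = s 0 ->
  (forall a, n = S a -> 1 <= m -> p a <> s 1) ->
  nonbacktracking (glue p n s) (n + m).
Proof.
  intros [Hp1 Hp2] [Hs1 Hs2] Hj Hturn; split; intros i Hi.
  - destruct (le_lt_dec n i).
    + rewrite !glue_right by (auto; lia).
      replace (S i - n) with (S (i - n)) by lia. apply Hs1. lia.
    + rewrite !glue_left by lia. apply Hp1. lia.
  - destruct (le_lt_dec n i).
    + rewrite !glue_right by (auto; lia).
      replace (S (S i) - n) with (S (S (i - n))) by lia. apply Hs2. lia.
    + destruct (le_lt_dec (S (S i)) n).
      * rewrite !glue_left by lia. apply Hp2. lia.
      * rewrite glue_right, glue_left by (auto; lia).
        replace (S (S i) - n) with 1 by lia.
        intro E. apply (Hturn i); [lia | lia | auto].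
Qed.

(* Otherwise [p] followed by [p'] backwards would be a closed non-backtracking walk. *)
Lemma nonbacktracking_last p n p' n' :
  nonbacktracking p (S n) -> nonbacktracking p' (S n') ->
  p 0 = p' 0 -> p (S n) = p' (S n') -> p n = p' n'.
Proof.
  intros Hp Hp' H0 Hend. apply NNPP. intro Hne.
  set (s := fun i => p' (S n' - i)).
  assert (Hc : nonbacktracking (glue p (S n) s) (S n + S n')).
  { apply nonbacktracking_glue; auto.
    - exact (nonbacktracking_rev p' (S n') Hp').
    - intros a [= <-] _. unfold s. replace (S n' - 1) with n' by lia. exact Hne. }
  apply nonbacktracking_closed in Hc; [lia|].
  rewrite glue_left, glue_right by (auto; lia).
  unfold s. replace (S n' - (S n + S n' - S n)) with 0 by lia. exact H0.
Qed.

Lemma nonbacktracking_unique p n p' n' :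
  nonbacktracking p n -> nonbacktracking p' n' -> p 0 = p' 0 -> p n = p' n' ->
  n = n' /\ forall i, i <= n -> p i = p' i.
Proof.
  revert n'. induction n as [|n IH]; intros [|n'] Hp Hp' H0 Hend.
  - split; [reflexivity|]. intros i Hi. replace i with 0 by lia. exact H0.
  - apply nonbacktracking_closed in Hp'; [discriminate | congruence].
  - apply nonbacktracking_closed in Hp; [discriminate | congruence].
  - destruct (IH n') as [<- Heq]; auto using nonbacktracking_last;
      try (eapply nonbacktracking_le; eauto).
    split; [reflexivity|]. intros i Hi.
    destruct (Nat.eq_dec i (S n)) as [->|]; [exact Hend | apply Heq; lia].
Qed.

Lemma walk_of_nonbacktracking n p : nonbacktracking p n -> walk adj n (p 0) (p n).
Proof.
  revert p; induction n as [|n IH]; intros p Hp.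
  - constructor.
  - apply walkS with (p 1); [apply Hp; lia|].
    exact (IH _ (nonbacktracking_tail p n Hp)).
Qed.

Lemma walk_reduce m x y : walk adj m x y ->
  exists p n, nonbacktracking p n /\ p 0 = x /\ p n = y /\ n <= m.
Proof.
  intros W; induction W as [x|m x y z Hxy W (p & k & Hp & Hp0 & Hpk & Hk)].
  - exists (fun _ => x), 0. repeat split; intros; lia.
  - destruct (classic (1 <= k /\ p 1 = x)) as [[Hk1 E] | NE].
    + exists (fun i => p (S i)), (k - 1). split; [|split; [auto|split]].
      * apply nonbacktracking_tail. replace (S (k - 1)) with k by lia. exact Hp.
      * replace (S (k - 1)) with k by lia. exact Hpk.
      * lia.
    + exists (glue (edge x y) 1 p), (1 + k). split; [|split; [reflexivity|split; [|lia]]].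
      * apply nonbacktracking_glue; auto using nonbacktracking_edge.
        intros a [= <-] Hk1 E. apply NE. auto.
      * rewrite glue_right by (auto; lia). replace (1 + k - 1) with k by lia. exact Hpk.
Qed.

Lemma dist_nonbacktracking p n : nonbacktracking p n -> dist adj (p 0) (p n) = n.
Proof.
  intros Hp.
  assert (Hmin : is_dist adj (p 0) (p n) n).
  { split; [now apply walk_of_nonbacktracking|].
    intros m W. destruct (walk_reduce _ _ _ W) as (p' & k & Hp' & H0 & Hk & Hkm).
    destruct (nonbacktracking_unique p n p' k) as [<- _]; auto. }
  unfold dist. destruct (epsilon_spec (inhabits 0) _ (ex_intro _ n Hmin)) as [W Hle].
  apply Nat.le_antisymm; [apply Hle, Hmin | apply Hmin, W].
Qed.

Lemma geodesic_exists x y :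
  exists p, nonbacktracking p (dist adj x y) /\ p 0 = x /\ p (dist adj x y) = y.
Proof.
  destruct (connected x y) as [m W].
  destruct (walk_reduce _ _ _ W) as (p & n & Hp & <- & <- & _).
  rewrite (dist_nonbacktracking p n Hp). exists p; auto.
Qed.

Lemma dist_aut (h : Aut adj) x y : dist adj (af h x) (af h y) = dist adj x y.
Proof.
  destruct (geodesic_exists x y) as (p & Hp & Hp0 & Hpn).
  pose proof (dist_nonbacktracking _ _ (nonbacktracking_aut h p _ Hp)) as E.
  cbv beta in E. rewrite Hp0, Hpn in E. exact E.
Qed.

Lemma ray_nonbacktracking r n : is_ray adj r -> nonbacktracking r n.
Proof. intros Hr; split; intros i _; apply Hr. Qed.

Lemma nonbacktracking_ray r : (forall n, nonbacktracking r n) -> is_ray adj r.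
Proof. intros H n. destruct (H (S (S n))) as [H1 H2]. split; [apply H1 | apply H2]; lia. Qed.

Lemma ray_shift r a : is_ray adj r -> is_ray adj (fun n => r (n + a)).
Proof. intros Hr n. apply Hr. Qed.

Lemma ray_act (h : Aut adj) w : is_ray adj w -> is_ray adj (act_ray h w).
Proof.
  intros Hw. apply nonbacktracking_ray. intro n.
  now apply nonbacktracking_aut, ray_nonbacktracking.
Qed.

Lemma ray_dist r n : is_ray adj r -> dist adj (r 0) (r n) = n.
Proof. intros Hr. exact (dist_nonbacktracking r n (ray_nonbacktracking r n Hr)). Qed.

Lemma ray_unique r s : is_ray adj r -> is_ray adj s -> r 0 = s 0 -> ray_equiv r s ->
  forall i, r i = s i.
Proof.
  intros Hr Hs H0 (k & m & H) i.
  assert (k = m) as <-.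
  { pose proof (ray_dist r k Hr) as Ek. pose proof (ray_dist s m Hs) as Em.
    specialize (H 0). cbn in H. rewrite H, H0 in Ek. congruence. }
  apply (nonbacktracking_unique r (i + k) s (i + k)); auto using ray_nonbacktracking; lia.
Qed.

(* Follow a geodesic to a point of [w] closest to [x], then follow [w]; minimality
   rules out backtracking at the junction. *)
Lemma geod_ray_exists x w : is_ray adj w -> exists r, geod_ray adj x w r.
Proof.
  intros Hw.
  destruct (nat_least (fun v => exists n, dist adj x (w n) = v)
              (ex_intro _ _ (ex_intro _ 0 eq_refl))) as (v & (n0 & Hn0) & Hmin).
  destruct (geodesic_exists x (w n0)) as (p & Hp & Hp0 & Hpv). rewrite Hn0 in Hp, Hpv.
  set (s := fun i => w (i + n0)).
  assert (Hr : forall m, nonbacktracking (glue p v s) (v + m)).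
  { intro m. apply nonbacktracking_glue; auto.
    - apply ray_nonbacktracking, ray_shift, Hw.
    - intros a -> _ E.
      pose proof (dist_nonbacktracking p a (nonbacktracking_le p (S a) a Hp ltac:(lia))) as Ea.
      rewrite Hp0, E in Ea. specialize (Hmin a (ex_intro _ _ Ea)). lia. }
  exists (glue p v s). split; [|split].
  - apply nonbacktracking_ray. intro n. apply nonbacktracking_le with (v + n); auto; lia.
  - rewrite glue_left by lia. exact Hp0.
  - exists v, n0. intro n. rewrite glue_right by (auto; lia). unfold s. f_equal. lia.
Qed.

Lemma geod_ray_shift x w r a : geod_ray adj x w r -> geod_ray adj (r a) w (fun n => r (n + a)).
Proof.
  intros (Hr & _ & Hrw). split; [now apply ray_shift | split; [reflexivity|]].
  apply ray_equiv_trans with r; auto using ray_equiv_sym, ray_equiv_tail.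
Qed.

Lemma geod_ray_tail x y w r s a : geod_ray adj x w r -> geod_ray adj y w s -> r a = y ->
  forall n, s n = r (n + a).
Proof.
  intros Hrg (Hs & Hs0 & Hsw) Ha.
  destruct (geod_ray_shift x w r a Hrg) as (Hra & Hra0 & Hraw).
  apply ray_unique; auto; [congruence|].
  apply ray_equiv_trans with w; auto using ray_equiv_sym.
Qed.

(** * The horocycle bracket *)

(* The predicate under the [epsilon] in [horo]; [y] is where [[o, w)] and [[x, w)] merge. *)
Definition horo_spec (o x : X) (w : nat -> X) (z : Z) : Prop :=
  exists (y : X) (ro rx ry : nat -> X),
    geod_ray adj o w ro /\ geod_ray adj x w rx /\ geod_ray adj y w ry /\
    (forall v, ((exists i, ro i = v) /\ (exists i, rx i = v)) <-> (exists i, ry i = v)) /\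
    z = (Z.of_nat (dist adj o y) - Z.of_nat (dist adj x y))%Z.

Lemma horo_spec_exists o x w : is_ray adj w -> exists z, horo_spec o x w z.
Proof.
  intros Hw.
  destruct (geod_ray_exists o w Hw) as (ro & Hro).
  destruct (geod_ray_exists x w Hw) as (rx & Hrx).
  assert (Hmeet : exists K M, forall n, ro (n + K) = rx (n + M)).
  { destruct Hro as (_ & _ & Hrow), Hrx as (_ & _ & Hrxw).
    apply ray_equiv_trans with w; auto using ray_equiv_sym. }
  destruct (nat_least _ Hmeet) as (K & (M & HKM) & HKmin).
  exists (Z.of_nat (dist adj o (ro K)) - Z.of_nat (dist adj x (ro K)))%Z.
  exists (ro K), ro, rx, (fun n => ro (n + K)).
  split; [exact Hro|]. split; [exact Hrx|].
  split; [exact (geod_ray_shift o w ro K Hro)|]. split; [|reflexivity].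
  intro v; split.
  - intros [[i <-] [j Hj]].
    assert (Hij : forall n, ro (n + i) = rx (n + j)).
    { intro n. exact (geod_ray_tail x (ro i) w rx _ j Hrx (geod_ray_shift o w ro i Hro) Hj n). }
    specialize (HKmin i (ex_intro _ j Hij)).
    exists (i - K). f_equal. lia.
  - intros [i <-]. split; [exists (i + K) | exists (i + M)]; auto.
Qed.

Lemma horo_spec_eventually o x w z : horo_spec o x w z ->
  exists N, forall t, N <= t ->
    z = (Z.of_nat (dist adj o (w t)) - Z.of_nat (dist adj x (w t)))%Z.
Proof.
  intros (y & ro & rx & ry & Hro & Hrx & Hry & Hmeet & ->).
  destruct (proj2 (Hmeet (ry 0)) (ex_intro _ 0 eq_refl)) as [[a Ha] [b Hb]].
  assert (Hry0 : ry 0 = y) by apply Hry. rewrite Hry0 in Ha, Hb.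
  pose proof (geod_ray_tail o y w ro ry a Hro Hry Ha) as Hya.
  pose proof (geod_ray_tail x y w rx ry b Hrx Hry Hb) as Hyb.
  destruct Hry as (_ & _ & (k & m & Hkm)).
  destruct Hro as (Hro & Hro0 & _), Hrx as (Hrx & Hrx0 & _).
  assert (Do : forall n, dist adj o (ro n) = n) by (intro n; rewrite <- Hro0; apply ray_dist, Hro).
  assert (Dx : forall n, dist adj x (rx n) = n) by (intro n; rewrite <- Hrx0; apply ray_dist, Hrx).
  exists m. intros t Ht. replace t with (t - m + m) by lia. rewrite <- Hkm.
  rewrite <- Ha at 1. rewrite <- Hb, Do, Dx.
  rewrite Hya at 1. rewrite Hyb, Do, Dx. lia.
Qed.

Lemma horo_eventually o x w : is_ray adj w ->
  exists N, forall t, N <= t ->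
    horo adj o x w = (Z.of_nat (dist adj o (w t)) - Z.of_nat (dist adj x (w t)))%Z.
Proof.
  intros Hw. apply horo_spec_eventually.
  exact (epsilon_spec (inhabits 0%Z) (horo_spec o x w) (horo_spec_exists o x w Hw)).
Qed.

Lemma horo_ray_equiv o x w w' : is_ray adj w -> is_ray adj w' -> ray_equiv w w' ->
  horo adj o x w = horo adj o x w'.
Proof.
  intros Hw Hw' (k & m & H).
  destruct (horo_eventually o x w Hw) as [N1 H1], (horo_eventually o x w' Hw') as [N2 H2].
  rewrite (H1 (N1 + N2 + k)), (H2 (N1 + N2 + m)), H by lia. reflexivity.
Qed.

Lemma horo_cocycle o (h : Aut adj) x w : is_ray adj w ->
  horo adj o (af h x) (act_ray h w) = (horo adj o x w - horo adj o (ainv h o) w)%Z.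
Proof.
  intros Hw.
  destruct (horo_eventually o (af h x) (act_ray h w) (ray_act h w Hw)) as [N1 H1].
  destruct (horo_eventually o x w Hw) as [N2 H2].
  destruct (horo_eventually o (ainv h o) w Hw) as [N3 H3].
  rewrite (H1 (N1 + N2 + N3)), (H2 (N1 + N2 + N3)), (H3 (N1 + N2 + N3)) by lia.
  unfold act_ray. rewrite <- (afK h o) at 1. rewrite !dist_aut. lia.
Qed.

Lemma horo_base o w : is_ray adj w -> horo adj o o w = 0%Z.
Proof. intros Hw. destruct (horo_eventually o o w Hw) as [N H]. rewrite (H N) by lia. lia. Qed.

Lemma horo_af_o o (h : Aut adj) w : is_ray adj w ->
  horo adj o (af h o) (act_ray h w) = (- horo adj o (ainv h o) w)%Z.
Proof. intros Hw. rewrite horo_cocycle, horo_base by exact Hw. lia. Qed.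

Lemma horo_ainv_comp o (g g' : Aut adj) w : is_ray adj w ->
  (- horo adj o (ainv g (ainv g' o)) w)%Z =
  (- horo adj o (ainv g o) w + horo adj o (af g' o) (act_ray (aut_comp g' g) w))%Z.
Proof.
  intros Hw.
  change (act_ray (aut_comp g' g) w) with (act_ray g' (act_ray g w)).
  rewrite horo_af_o by now apply ray_act.
  pose proof (horo_cocycle o g (ainv g (ainv g' o)) w Hw) as C. rewrite afK in C. lia.
Qed.

(** * The stabiliser of a vertex is transitive on ends *)

Definition has_card (A : X -> Prop) (n : nat) : Prop :=
  exists l, NoDup l /\ length l = n /\ forall x, A x <-> In x l.

Lemma has_card_ext (A B : X -> Prop) n :
  (forall x, A x <-> B x) -> has_card A n -> has_card B n.
Proof.
  intros H (l & Hnd & Hlen & Hl). exists l. split; [exact Hnd | split; [exact Hlen|]].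
  intro x. rewrite <- H. apply Hl.
Qed.

Lemma has_card_remove (A : X -> Prop) n a :
  has_card A (S n) -> A a -> has_card (fun x => A x /\ x <> a) n.
Proof.
  intros (l & Hnd & Hlen & Hl) Ha. apply Hl in Ha.
  destruct (in_split _ _ Ha) as (l1 & l2 & ->).
  exists (l1 ++ l2). split; [eapply NoDup_remove_1; eauto | split].
  - rewrite length_app in *. cbn in Hlen. lia.
  - intro x. rewrite Hl, !in_app_iff. cbn. split.
    + intros [[Hx | [<- | Hx]] Hxa]; tauto.
    + intros Hx. split; [tauto|]. intros ->.
      apply (NoDup_remove_2 _ _ _ Hnd), in_app_iff, Hx.
Qed.

Lemma has_card_S_inhabited (A : X -> Prop) n : has_card A (S n) -> exists a, A a.
Proof. intros ([|a l] & _ & Hlen & Hl); [discriminate | exists a; apply Hl; now left]. Qed.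

Lemma has_card_0 (A : X -> Prop) a : has_card A 0 -> ~ A a.
Proof. intros ([|b l] & _ & Hlen & Hl) Ha; [exact (proj1 (Hl a) Ha) | discriminate]. Qed.

Definition bijection (A B : X -> Prop) (f g : X -> X) : Prop :=
  (forall x, A x -> B (f x) /\ g (f x) = x) /\ (forall y, B y -> A (g y) /\ f (g y) = y).

Definition fupdate (f : X -> X) (a b : X) (x : X) : X :=
  if excluded_middle_informative (x = a) then b else f x.

Lemma bijection_update A B f g a b :
  bijection (fun x => A x /\ x <> a) (fun y => B y /\ y <> b) f g -> A a -> B b ->
  bijection A B (fupdate f a b) (fupdate g b a).
Proof.
  intros [H1 H2] Ha Hb. unfold fupdate. split.
  - intros x Hx. destruct (excluded_middle_informative (x = a)) as [-> | Hxa].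
    + destruct (excluded_middle_informative (b = b)); [auto | congruence].
    + destruct (H1 x (conj Hx Hxa)) as [[HB Hne] E].
      destruct (excluded_middle_informative (f x = b)); [congruence | auto].
  - intros y Hy. destruct (excluded_middle_informative (y = b)) as [-> | Hyb].
    + destruct (excluded_middle_informative (a = a)); [auto | congruence].
    + destruct (H2 y (conj Hy Hyb)) as [[HA Hne] E].
      destruct (excluded_middle_informative (g y = a)); [congruence | auto].
Qed.

Lemma bijection_exists n A B : has_card A n -> has_card B n -> exists f g, bijection A B f g.
Proof.
  revert A B; induction n as [|n IH]; intros A B HA HB.
  - exists (fun x => x), (fun x => x).
    split; intros x Hx; exfalso; [exact (has_card_0 A x HA Hx) | exact (has_card_0 B x HB Hx)].
  - destruct (has_card_S_inhabited _ _ HA) as [a Ha], (has_card_S_inhabited _ _ HB) as [b Hb].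
    destruct (IH _ _ (has_card_remove _ _ _ HA Ha) (has_card_remove _ _ _ HB Hb))
      as (f & g & Hfg).
    exists (fupdate f a b), (fupdate g b a). now apply bijection_update.
Qed.

Lemma bijection_prescribe n A B a b : has_card A n -> has_card B n -> A a -> B b ->
  exists f g, bijection A B f g /\ f a = b.
Proof.
  intros HA HB Ha Hb. destruct n as [|n]; [exfalso; exact (has_card_0 A a HA Ha)|].
  destruct (bijection_exists n _ _ (has_card_remove _ _ _ HA Ha) (has_card_remove _ _ _ HB Hb))
    as (f & g & Hfg).
  exists (fupdate f a b), (fupdate g b a). split; [now apply bijection_update|].
  unfold fupdate. destruct (excluded_middle_informative (a = a)); [reflexivity | congruence].
Qed.

Section Regular.
Variables (q : nat) (o : X).
Hypothesis regular : forall x, exists l : list X,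
  length l = S q /\ NoDup l /\ forall y, adj x y <-> In y l.

Definition depth (x : X) : nat := dist adj o x.

Lemma depth_o : depth o = 0.
Proof. apply (dist_nonbacktracking (fun _ => o) 0). split; intros; lia. Qed.

Lemma depth_eq0 x : depth x = 0 -> x = o.
Proof.
  unfold depth. intros H. destruct (geodesic_exists o x) as (p & _ & H0 & Hx).
  rewrite H in Hx. congruence.
Qed.

Lemma depth_geodesic p n a : nonbacktracking p n -> p 0 = o -> a <= n -> depth (p a) = a.
Proof.
  intros Hp H0 Ha. unfold depth. rewrite <- H0.
  apply dist_nonbacktracking, (nonbacktracking_le p n); auto.
Qed.

Lemma depth_ray r i : is_ray adj r -> r 0 = o -> depth (r i) = i.
Proof. intros Hr H0. apply (depth_geodesic r i); auto using ray_nonbacktracking. Qed.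

Definition child (y z : X) : Prop := adj y z /\ depth z = S (depth y).

Lemma geodesic_step y z p : adj y z ->
  nonbacktracking p (depth y) -> p 0 = o -> p (depth y) = y ->
  (exists a, depth y = S a /\ p a = z) \/ child y z.
Proof.
  intros Hyz Hp H0 Hy.
  destruct (classic (exists a, depth y = S a /\ p a = z)) as [Hback | Hfwd]; [now left | right].
  split; [exact Hyz|].
  assert (He : nonbacktracking (glue p (depth y) (edge y z)) (depth y + 1)).
  { apply nonbacktracking_glue; auto using nonbacktracking_edge.
    intros a Ha _ E. apply Hfwd. eauto. }
  assert (He0 : glue p (depth y) (edge y z) 0 = o) by (rewrite glue_left by lia; exact H0).
  pose proof (depth_geodesic _ _ (depth y + 1) He He0 (le_n _)) as D.
  rewrite glue_right in D by (auto; lia).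
  replace (depth y + 1 - depth y) with 1 in D by lia. cbn in D. lia.
Qed.

Lemma adj_child y z : adj y z -> child y z \/ child z y.
Proof.
  intros Hyz. destruct (geodesic_exists o y) as (p & Hp & H0 & Hy).
  destruct (geodesic_step y z p Hyz Hp H0 Hy) as [(a & Ha & <-) | Hc]; [right | now left].
  split; [now apply adj_sym|]. rewrite (depth_geodesic p (depth y) a); auto; lia.
Qed.

Lemma child_unique z1 z2 y : child z1 y -> child z2 y -> z1 = z2.
Proof.
  intros [H1 D1] [H2 D2]. destruct (geodesic_exists o y) as (p & Hp & H0 & Hy).
  destruct (geodesic_step y z1 p (adj_sym _ _ H1) Hp H0 Hy) as [(a & Ha & <-) | [_ D]]; [|lia].
  destruct (geodesic_step y z2 p (adj_sym _ _ H2) Hp H0 Hy) as [(b & Hb & <-) | [_ D]]; [|lia].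
  f_equal. lia.
Qed.

Lemma parent_exists y : y <> o -> exists z, child z y.
Proof.
  intros Hy. destruct (geodesic_exists o y) as (p & Hp & H0 & Hpy).
  change (dist adj o y) with (depth y) in Hp, Hpy.
  destruct (depth y) as [|a] eqn:Ed; [contradiction (Hy (depth_eq0 y Ed))|].
  exists (p a). split.
  - rewrite <- Hpy. apply Hp. lia.
  - rewrite Ed, (depth_geodesic p (S a) a); auto.
Qed.

Definition parent (y : X) : X := epsilon (inhabits o) (fun z => child z y).

Lemma parent_spec y : y <> o -> child (parent y) y.
Proof. intros Hy. exact (epsilon_spec (inhabits o) (fun z => child z y) (parent_exists y Hy)). Qed.

Lemma child_neq_o z y : child z y -> y <> o.
Proof. intros [_ D] ->. rewrite depth_o in D. discriminate. Qed.

Lemma parent_eq z y : child z y -> parent y = z.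
Proof.
  intros H. apply child_unique with y; [apply parent_spec | exact H].
  now apply child_neq_o with z.
Qed.

Lemma children_card_o : has_card (child o) (S q).
Proof.
  destruct (regular o) as (l & Hlen & Hnd & Hl). exists l.
  split; [exact Hnd | split; [exact Hlen|]].
  intro z. rewrite <- Hl. split; [intros [Hz _]; exact Hz|].
  intros Hz. destruct (adj_child o z Hz) as [Hc | [_ D]]; [exact Hc|].
  rewrite depth_o in D. discriminate.
Qed.

Lemma children_card y : y <> o -> has_card (child y) q.
Proof.
  intros Hy. destruct (parent_exists y Hy) as [z Hz].
  destruct (regular y) as (l & Hlen & Hnd & Hl).
  apply has_card_ext with (fun x => In x l /\ x <> z).
  - intro x. rewrite <- Hl. split.
    + intros [Hx Hxz]. destruct (adj_child y x Hx) as [Hc | Hc]; auto.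
      contradiction (Hxz (child_unique x z y Hc Hz)).
    + intros [Hx D]. split; [exact Hx|]. intros ->. destruct Hz as [_ Dz]. lia.
  - apply has_card_remove; [exists l; repeat split; auto; tauto |].
    apply Hl, adj_sym, Hz.
Qed.

Lemma child_ray r i : is_ray adj r -> r 0 = o -> child (r i) (r (S i)).
Proof. intros Hr H0. split; [apply Hr|]. rewrite !(depth_ray r); auto. Qed.

Section RootedIso.
Variables (Ra Rb : nat -> X).
Hypotheses (HRa : is_ray adj Ra) (HRa0 : Ra 0 = o) (HRb : is_ray adj Rb) (HRb0 : Rb 0 = o).

Definition child_bij (y y' : X) : X -> X :=
  epsilon (inhabits (fun x : X => x)) (fun f => exists g,
    bijection (child y) (child y') f g /\
    forall i, y = Ra i -> y' = Rb i -> f (Ra (S i)) = Rb (S i)).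

Lemma child_bij_spec y y' : (y = o <-> y' = o) ->
  exists g, bijection (child y) (child y') (child_bij y y') g /\
    forall i, y = Ra i -> y' = Rb i -> child_bij y y' (Ra (S i)) = Rb (S i).
Proof.
  intros Hoo. unfold child_bij. apply epsilon_spec.
  assert (Hc : exists m, has_card (child y) m /\ has_card (child y') m).
  { destruct (classic (y = o)) as [E | E].
    - exists (S q). rewrite E, (proj1 Hoo E). split; apply children_card_o.
    - exists q. split; apply children_card; tauto. }
  destruct Hc as (m & Hm & Hm').
  destruct (classic (exists i, y = Ra i /\ y' = Rb i)) as [(i & -> & ->) | Hno].
  - destruct (bijection_prescribe m _ _ (Ra (S i)) (Rb (S i)) Hm Hm') as (f & g & Hfg & Hf);
      auto using child_ray.
    exists f, g. split; [exact Hfg|]. intros i' E _.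
    replace i' with i; [exact Hf|].
    rewrite <- (depth_ray Ra i' HRa HRa0), <- (depth_ray Ra i HRa HRa0), E. reflexivity.
  - destruct (bijection_exists m _ _ Hm Hm') as (f & g & Hfg).
    exists f, g. split; [exact Hfg|]. intros i E1 E2. exfalso. eauto.
Qed.

Fixpoint iso_level (n : nat) (x : X) : X :=
  match n with
  | 0 => o
  | S m => child_bij (parent x) (iso_level m (parent x)) x
  end.

Definition iso (x : X) : X := iso_level (depth x) x.

Lemma iso_o : iso o = o.
Proof. unfold iso. rewrite depth_o. reflexivity. Qed.

Lemma iso_child p x : child p x -> iso x = child_bij p (iso p) x.
Proof.
  intros H. unfold iso at 1. rewrite (proj2 H). cbn. rewrite (parent_eq p x H). reflexivity.
Qed.

Lemma iso_depth n x : depth x = n -> depth (iso x) = n.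
Proof.
  revert x; induction n as [|n IH]; intros x Hx.
  - rewrite (depth_eq0 x Hx), iso_o. apply depth_o.
  - assert (Hxo : x <> o) by (intros ->; rewrite depth_o in Hx; discriminate).
    pose proof (parent_spec x Hxo) as Hp. set (p := parent x) in *.
    assert (Hdp : depth p = n) by (destruct Hp; lia).
    assert (Hoo : p = o <-> iso p = o).
    { split; intro E.
      - rewrite E. apply iso_o.
      - apply depth_eq0. rewrite Hdp, <- (IH p Hdp), E. apply depth_o. }
    destruct (child_bij_spec p (iso p) Hoo) as (g & [Hf _] & _).
    rewrite (iso_child p x Hp). destruct (Hf x Hp) as [[_ D] _]. pose proof (IH p Hdp). lia.
Qed.

Lemma iso_eq_o p : p = o <-> iso p = o.
Proof.
  split; intro E.
  - rewrite E. apply iso_o.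
  - apply depth_eq0. rewrite <- (iso_depth (depth p) p eq_refl), E. apply depth_o.
Qed.

Lemma iso_child_mono p x : child p x -> child (iso p) (iso x).
Proof.
  intros H. destruct (child_bij_spec p (iso p) (iso_eq_o p)) as (g & [Hf _] & _).
  rewrite (iso_child p x H). apply (Hf x H).
Qed.

Lemma iso_inj n x y : depth x = n -> iso x = iso y -> x = y.
Proof.
  revert x y; induction n as [|n IH]; intros x y Hx E.
  - rewrite (depth_eq0 x Hx), iso_o in *. symmetry. apply iso_eq_o. auto.
  - assert (Hxo : x <> o) by (intros ->; rewrite depth_o in Hx; discriminate).
    assert (Hyo : y <> o) by (intros ->; apply Hxo, iso_eq_o; rewrite E; apply iso_o).
    pose proof (parent_spec x Hxo) as Hpx. pose proof (parent_spec y Hyo) as Hpy.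
    assert (Hp : parent x = parent y).
    { apply IH; [destruct Hpx; lia|].
      apply child_unique with (iso x); [|rewrite E]; now apply iso_child_mono. }
    destruct (child_bij_spec (parent x) (iso (parent x)) (iso_eq_o _)) as (g & [Hf _] & _).
    rewrite (iso_child _ _ Hpx), (iso_child _ _ Hpy), <- Hp in E. rewrite <- Hp in Hpy.
    destruct (Hf x Hpx) as [_ Ex], (Hf y Hpy) as [_ Ey]. congruence.
Qed.

Lemma iso_surj n y : depth y = n -> exists x, iso x = y.
Proof.
  revert y; induction n as [|n IH]; intros y Hy.
  - exists o. rewrite iso_o. symmetry. now apply depth_eq0.
  - assert (Hyo : y <> o) by (intros ->; rewrite depth_o in Hy; discriminate).
    pose proof (parent_spec y Hyo) as Hpy.
    destruct (IH (parent y) ltac:(destruct Hpy; lia)) as [p Hp].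
    destruct (child_bij_spec p (iso p) (iso_eq_o _)) as (g & [_ Hg] & _).
    rewrite <- Hp in Hpy. destruct (Hg y Hpy) as [Hc E].
    exists (g y). rewrite (iso_child p _ Hc). exact E.
Qed.

Lemma iso_child_refl x y : child (iso x) (iso y) -> child x y.
Proof.
  intros H.
  assert (Hyo : y <> o) by (intros ->; rewrite iso_o in H; exact (child_neq_o _ _ H eq_refl)).
  pose proof (parent_spec y Hyo) as Hpy.
  assert (E : parent y = x).
  { apply (iso_inj (depth (parent y))); auto.
    apply child_unique with (iso y); [now apply iso_child_mono | exact H]. }
  rewrite <- E. exact Hpy.
Qed.

Lemma iso_adj x y : adj x y <-> adj (iso x) (iso y).
Proof.
  split; intro H.
  - destruct (adj_child x y H) as [Hc | Hc]; apply iso_child_mono in Hc;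
      [apply Hc | apply adj_sym, Hc].
  - destruct (adj_child _ _ H) as [Hc | Hc]; apply iso_child_refl in Hc;
      [apply Hc | apply adj_sym, Hc].
Qed.

Lemma iso_ray i : iso (Ra i) = Rb i.
Proof.
  induction i as [|i IH].
  - rewrite HRa0, HRb0. apply iso_o.
  - rewrite (iso_child _ _ (child_ray Ra i HRa HRa0)).
    pose proof (iso_eq_o (Ra i)) as Hoo. rewrite IH in *.
    destruct (child_bij_spec (Ra i) (Rb i) Hoo) as (g & _ & Hf). now apply Hf.
Qed.

Lemma stab_exists : exists h : Aut adj, af h o = o /\ forall i, af h (Ra i) = Rb i.
Proof.
  set (iso_inv := fun y => epsilon (inhabits o) (fun x => iso x = y)).
  assert (Hr : forall y, iso (iso_inv y) = y).
  { intro y. apply (epsilon_spec (inhabits o) (fun x => iso x = y)).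
    exact (iso_surj (depth y) y eq_refl). }
  assert (Hl : forall x, iso_inv (iso x) = x).
  { intro x. apply (iso_inj (depth (iso_inv (iso x)))); auto. }
  exists {| af := iso; ainv := iso_inv; ainvK := Hl; afK := Hr; af_adj := iso_adj |}.
  split; [apply iso_o | apply iso_ray].
Qed.

End RootedIso.

Lemma stab_transitive w w' : is_ray adj w -> is_ray adj w' ->
  exists h : Aut adj, af h o = o /\ ray_equiv (act_ray h w) w'.
Proof.
  intros Hw Hw'.
  destruct (geod_ray_exists o w Hw) as (Ra & HRa & HRa0 & HRaw).
  destruct (geod_ray_exists o w' Hw') as (Rb & HRb & HRb0 & HRbw).
  destruct (stab_exists Ra Rb HRa HRa0 HRb HRb0) as (h & Ho & Hh).
  exists h. split; [exact Ho|].
  apply ray_equiv_trans with (act_ray h Ra); [now apply ray_equiv_act, ray_equiv_sym|].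
  apply ray_equiv_trans with Rb; [apply ray_equiv_ext, Hh | exact HRbw].
Qed.

(** * The Iwasawa height *)

Section Iwasawa.
Variables (wp : nat -> X) (L : Z -> X) (tau : Aut adj).
Hypotheses (Hwp : is_ray adj wp)
  (HL : forall n : Z, adj (L n) (L (n + 1)%Z) /\ L (n + 2)%Z <> L n)
  (HL0 : L 0%Z = o)
  (HLp : ray_equiv (fun n => L (Z.of_nat n)) wp)
  (Htp : ray_equiv (act_ray tau wp) wp)
  (Htr : forall n : Z, af tau (L n) = L (n + 1)%Z).

Definition busemann (x : X) : Z := horo adj o x wp.

Lemma line_nonbacktracking a n : nonbacktracking (fun i => L (a + Z.of_nat i)%Z) n.
Proof.
  split; intros i Hi.
  - replace (a + Z.of_nat (S i))%Z with (a + Z.of_nat i + 1)%Z by lia. apply HL.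
  - replace (a + Z.of_nat (S (S i)))%Z with (a + Z.of_nat i + 2)%Z by lia. apply HL.
Qed.

Lemma line_dist a b : (a <= b)%Z -> dist adj (L a) (L b) = Z.to_nat (b - a).
Proof.
  intros Hab.
  pose proof (dist_nonbacktracking _ _ (line_nonbacktracking a (Z.to_nat (b - a)))) as E.
  cbv beta in E.
  replace (a + Z.of_nat (Z.to_nat (b - a)))%Z with b in E by lia.
  replace (a + Z.of_nat 0)%Z with a in E by lia. exact E.
Qed.

Lemma busemann_line m : busemann (L m) = m.
Proof.
  assert (Hray : is_ray adj (fun n => L (Z.of_nat n))).
  { apply nonbacktracking_ray. intro n. exact (line_nonbacktracking 0 n). }
  unfold busemann. rewrite (horo_ray_equiv o (L m) wp _ Hwp Hray (ray_equiv_sym _ _ HLp)).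
  destruct (horo_eventually o (L m) _ Hray) as [N H].
  rewrite (H (N + Z.to_nat (Z.abs m))) by lia. rewrite <- HL0, !line_dist by lia. lia.
Qed.

Lemma busemann_aut (h : Aut adj) x : ray_equiv (act_ray h wp) wp ->
  busemann (af h x) = (busemann x - busemann (ainv h o))%Z.
Proof.
  intros Hh. unfold busemann.
  rewrite (horo_ray_equiv o (af h x) wp (act_ray h wp) Hwp (ray_act h wp Hwp)
             (ray_equiv_sym _ _ Hh)).
  apply horo_cocycle, Hwp.
Qed.

Lemma busemann_zpow j y : busemann (af (aut_zpow tau j) y) = (busemann y + j)%Z.
Proof.
  rewrite busemann_aut by now apply ray_equiv_act_zpow.
  assert (E : ainv (aut_zpow tau j) o = L (- j)%Z).
  { rewrite <- (ainvK (aut_zpow tau j) (L (- j)%Z)), (zpow_translate L tau Htr).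
    replace (- j + j)%Z with 0%Z by lia. now rewrite HL0. }
  rewrite E, busemann_line. lia.
Qed.

Lemma busemann_ray Ra s : geod_ray adj o wp Ra -> busemann (Ra s) = Z.of_nat s.
Proof.
  intros (HRa & HRa0 & HRaw). unfold busemann.
  rewrite (horo_ray_equiv o (Ra s) wp Ra Hwp HRa (ray_equiv_sym _ _ HRaw)).
  destruct (horo_eventually o (Ra s) Ra HRa) as [N H].
  rewrite (H (N + s)) by lia. rewrite <- HRa0 at 1. rewrite ray_dist by exact HRa.
  pose proof (ray_dist (fun n => Ra (n + s)) N (ray_shift Ra s HRa)) as E.
  cbn [Nat.add] in E. rewrite E. lia.
Qed.

Lemma busemann_shift_fixed (h : Aut adj) z : ray_equiv (act_ray h wp) wp -> af h z = z ->
  busemann (ainv h o) = 0%Z.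
Proof. intros Hh Hz. pose proof (busemann_aut h z Hh) as E. rewrite Hz in E. lia. Qed.

(* [h] moves the ray [[o, w+)] along itself, by an amount that the zero shift forces
   to vanish. *)
Lemma fixed_of_busemann_shift (h : Aut adj) : ray_equiv (act_ray h wp) wp ->
  busemann (ainv h o) = 0%Z -> exists z, af h z = z.
Proof.
  intros Hh H0. destruct (geod_ray_exists o wp Hwp) as (Ra & HRa).
  assert (Hq : ray_equiv (act_ray h Ra) Ra).
  { destruct HRa as (_ & _ & HRaw).
    apply ray_equiv_trans with (act_ray h wp); [now apply ray_equiv_act|].
    apply ray_equiv_trans with wp; [exact Hh | now apply ray_equiv_sym]. }
  destruct Hq as (K & M & HKM).
  assert (E1 : af h (Ra K) = Ra M) by exact (HKM 0).
  pose proof (busemann_aut h (Ra K) Hh) as E.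
  rewrite E1, H0, !(busemann_ray Ra) in E by exact HRa.
  exists (Ra K). rewrite E1. f_equal. lia.
Qed.

Lemma Hiw_unique (g : Aut adj) j :
  (exists k n, inK o k /\ inB wp n /\ aut_eq g (aut_comp k (aut_comp n (aut_zpow tau j)))) ->
  j = (- busemann (ainv g o))%Z.
Proof.
  intros (k & n & Hk & [Hn (z & Hz)] & Hg).
  pose proof (Hg (ainv g o)) as E. rewrite afK in E. cbn [af aut_comp] in E.
  apply (f_equal (ainv k)) in E. rewrite ainvK, (ainv_fixed k o Hk) in E.
  apply (f_equal (ainv n)) in E. rewrite ainvK in E.
  pose proof (busemann_zpow j (ainv g o)) as Ej.
  rewrite <- E, (busemann_shift_fixed n z Hn Hz) in Ej. lia.
Qed.

Lemma Hiw_exists (g : Aut adj) : exists j k n, inK o k /\ inB wp n /\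
  aut_eq g (aut_comp k (aut_comp n (aut_zpow tau j))).
Proof.
  destruct (stab_transitive wp (act_ray g wp) Hwp (ray_act g wp Hwp)) as (k & Hk & Hkw).
  set (j := (- busemann (ainv g o))%Z).
  set (n := aut_comp (aut_inv k) (aut_comp g (aut_zpow tau (- j)))).
  assert (Hn_end : ray_equiv (act_ray n wp) wp).
  { change (act_ray n wp)
      with (act_ray (aut_inv k) (act_ray g (act_ray (aut_zpow tau (- j)) wp))).
    apply ray_equiv_trans with (act_ray (aut_inv k) (act_ray g wp));
      [now apply ray_equiv_act, ray_equiv_act, ray_equiv_act_zpow|].
    apply ray_equiv_trans with (act_ray (aut_inv k) (act_ray k wp));
      [now apply ray_equiv_act, ray_equiv_sym|].
    apply ray_equiv_ext. intro t. apply ainvK. }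
  assert (Hn_o : af n (af (aut_zpow tau j) (ainv g o)) = o).
  { unfold n. cbn [af aut_comp aut_inv]. rewrite zpow_opp_cancel, afK.
    exact (ainv_fixed k o Hk). }
  exists j, k, n. split; [exact Hk | split; [split; [exact Hn_end|] |]].
  - apply fixed_of_busemann_shift; [exact Hn_end|].
    rewrite <- Hn_o, ainvK, busemann_zpow. unfold j. lia.
  - intro x. unfold n. cbn [af aut_comp aut_inv]. rewrite zpow_opp_cancel, afK. reflexivity.
Qed.

Lemma Hiw_val (g : Aut adj) : Hiw o wp tau g = (- busemann (ainv g o))%Z.
Proof. apply Hiw_unique. unfold Hiw. apply epsilon_spec, Hiw_exists. Qed.

Section Flip.
Variables (wm : nat -> X) (r : Aut adj).
Hypotheses (Hwm : is_ray adj wm)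
  (HLm : ray_equiv (fun n => L (- Z.of_nat n)%Z) wm)
  (HrK : inK o r) (Hr2 : aut_eq (aut_comp r r) (aut_id adj))
  (Hrt : forall j : Z, aut_eq (aut_comp r (aut_comp (aut_zpow tau j) (aut_inv r)))
                              (aut_zpow tau (- j))).

Lemma ainv_flip y : ainv r y = af r y.
Proof. assert (H : af r (af r y) = y) by exact (Hr2 y). rewrite <- H at 1. apply ainvK. Qed.

Lemma flip_line z : af r (L z) = L (- z)%Z.
Proof.
  pose proof (Hrt z o) as H. cbn [af aut_comp aut_inv aut_id] in H.
  rewrite (ainv_fixed r o HrK), <- HL0, !(zpow_translate L tau Htr), !Z.add_0_l in H.
  exact H.
Qed.

Lemma flip_ends : ray_equiv (act_ray r wm) wp.
Proof.
  apply ray_equiv_trans with (act_ray r (fun n => L (- Z.of_nat n)%Z));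
    [apply ray_equiv_act, ray_equiv_sym, HLm|].
  apply ray_equiv_trans with (fun n => L (Z.of_nat n)); [|exact HLp].
  apply ray_equiv_ext. intro n. unfold act_ray. rewrite flip_line. f_equal. lia.
Qed.

Lemma busemann_flip y : busemann (ainv r y) = horo adj o y wm.
Proof.
  rewrite ainv_flip. unfold busemann.
  rewrite (horo_ray_equiv o (af r y) wp (act_ray r wm) Hwp (ray_act r wm Hwm)
             (ray_equiv_sym _ _ flip_ends)).
  rewrite horo_cocycle, (ainv_fixed r o HrK), horo_base by exact Hwm. lia.
Qed.

End Flip.
End Iwasawa.

End Regular.
End Tree.

Theorem lemma2p3 (q : nat) (hq : 2 <= q) (X : Type) (adj : X -> X -> Prop)
  (Htree : is_regular_tree adj q)
  (o : X) (wm wp : nat -> X)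
  (Hwm : is_ray adj wm) (Hwp : is_ray adj wp) (Hneq : ~ ray_equiv wm wp)
  (* o lies on the geodesic ]wm, wp[, parametrized by L with L 0 = o *)
  (L : Z -> X)
  (HL : forall n : Z, adj (L n) (L (n + 1)%Z) /\ L (n + 2)%Z <> L n)
  (HL0 : L 0%Z = o)
  (HLp : ray_equiv (fun n => L (Z.of_nat n)) wp)
  (HLm : ray_equiv (fun n => L (- Z.of_nat n)%Z) wm)
  (tau : Aut adj)
  (Htp : ray_equiv (act_ray tau wp) wp) (Htm : ray_equiv (act_ray tau wm) wm)
  (Htr : forall n : Z, af tau (L n) = L (n + 1)%Z)
  (r : Aut adj) (HrK : inK o r) (Hr2 : aut_eq (aut_comp r r) (aut_id adj))
  (Hrt : forall j : Z, aut_eq (aut_comp r (aut_comp (aut_zpow tau j) (aut_inv r)))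
                              (aut_zpow tau (- j)))
  (g g' : Aut adj) :
  (horo adj o (af g o) (act_ray g wm) = Hiw o wp tau (aut_comp g r) /\
   Hiw o wp tau (aut_comp g r) = (- horo adj o (af (aut_inv g) o) wm)%Z) /\
  Hiw o wp tau (aut_comp g' g) =
    (Hiw o wp tau g + horo adj o (af g' o) (act_ray (aut_comp g' g) wp))%Z /\
  Hiw o wp tau (aut_comp g' (aut_comp g r)) =
    (Hiw o wp tau (aut_comp g r) + horo adj o (af g' o) (act_ray (aut_comp g' g) wm))%Z.
Proof.
  destruct Htree as (Hsym & _ & Hconn & Hcyc & Hreg).
  assert (Hval : forall h, Hiw o wp tau h = (- horo adj o (ainv h o) wp)%Z)
    by (intro h; eapply Hiw_val; eauto).
  assert (Hflip : forall y, horo adj o (ainv r y) wp = horo adj o y wm)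
    by (intro y; eapply busemann_flip; eauto).
  rewrite !Hval. cbn [ainv af aut_comp aut_inv]. rewrite !Hflip.
  split; [split | split].
  - apply horo_af_o; auto.
  - reflexivity.
  - apply horo_ainv_comp; auto.
  - apply horo_ainv_comp; auto.
Qed.
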